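(* Let $\lambda_*\in\mathbb C\setminus\{a_1,\dots,a_n\}$. If $(X,P),(\tilde X,\tilde P)\in T^*V_{n,r}$ and a symmetric $r\times r$ matrix $\Gamma=\Gamma(\lambda_* )$ satisfy the discrete Neumann equations $$P=A^{1/2}(\lambda_* )\tilde X-X\Gamma,\qquad \tilde P=-A^{1/2}(\lambda_* )X+\tilde X\Gamma,\qquad \Gamma=\tfrac12\big(\tilde X^TA^{1/2}(\lambda_* )X+X^TA^{1/2}(\lambda_* )\tilde X\big),$$ then for all $\lambda$ the intertwining relation $$\tilde L(\lambda)M(\lambda,\lambda_* )=M(\lambda,\lambda_* )L(\lambda),\qquad M(\lambda,\lambda_* )=\begin{pmatrix}-\Gamma&\mathbf I_r\\ (\lambda-\lambda_* )\mathbf I_r+\Gamma^2&-\Gamma\end{pmatrix}$$ holds. Conversely, up to the action of the group $\mathbb Z_2^n$ of reflections, the intertwining relation implies the discrete Neumann equations: if $(X,P),(\tilde X,\tilde P)\in T^*V_{n,r}$ and a symmetric $\Gamma$ satisfy the intertwining relation for all $\lambda$, then, after applying a suitable element of $\mathbb Z_2^n$ to $(\tilde X,\tilde P)$, the discrete Neumann equations hold.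
   Context: $A=\mathrm{diag}(a_1,\dots,a_n)$ with distinct $a_i$, $A(\lambda)=\lambda\mathbf I_n-A$, and $A^{1/2}(\lambda_* )=\mathrm{diag}(\sqrt{\lambda_*-a_1},\dots,\sqrt{\lambda_*-a_n})$ for a fixed choice of square roots. $T^*V_{n,r}$ is the set of pairs of $n\times r$ matrices $(X,P)$ with $X^TX=\mathbf I_r$, $X^TP+P^TX=0$. $L(\lambda)=\begin{pmatrix} X^TA(\lambda)^{-1}P & X^TA(\lambda)^{-1}X\\ \mathbf I_r-P^TA(\lambda)^{-1}P & -P^TA(\lambda)^{-1}X\end{pmatrix}$ and $\tilde L(\lambda)$ is the same expression in $(\tilde X,\tilde P)$. The group $\mathbb Z_2^n$ acts by changing the sign of the $i$-th row of both matrices of a pair simultaneously, $i=1,\dots,n$. *)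

From HB Require Import structures.
From mathcomp Require Import all_boot all_order all_algebra all_field.
Set Implicit Arguments. Unset Strict Implicit. Unset Printing Implicit Defensive.
Import Order.TTheory GRing.Theory Num.Theory.
Local Open Scope ring_scope.

Definition Ainv (n : nat) (a : 'I_n -> algC) (lam : algC) : 'M[algC]_n :=
  diag_mx (\row_i (lam - a i)^-1).

(* A^{1/2}(lams) = diag(s_1,...,s_n), s_i a fixed square root of lam_* - a_i *)
Definition Ahalf (n : nat) (s : 'I_n -> algC) : 'M[algC]_n :=
  diag_mx (\row_i s i).

Definition inTV (n r : nat) (X P : 'M[algC]_(n, r)) : Prop :=
  X^T *m X = 1%:M /\ X^T *m P + P^T *m X = 0.

Definition Lax (n r : nat) (a : 'I_n -> algC) (X P : 'M[algC]_(n, r))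
  (lam : algC) : 'M[algC]_(r + r) :=
  block_mx (X^T *m Ainv a lam *m P) (X^T *m Ainv a lam *m X)
           (1%:M - P^T *m Ainv a lam *m P) (- (P^T *m Ainv a lam *m X)).

Definition Mmat (r : nat) (G : 'M[algC]_r) (lam lams : algC) : 'M[algC]_(r + r) :=
  block_mx (- G) 1%:M ((lam - lams)%:M + G *m G) (- G).

Definition neumann (n r : nat) (s : 'I_n -> algC) (X P Xt Pt : 'M[algC]_(n, r))
  (G : 'M[algC]_r) : Prop :=
  [/\ P = Ahalf s *m Xt - X *m G,
      Pt = - (Ahalf s *m X) + Xt *m G
    & G = 2^-1 *: (Xt^T *m Ahalf s *m X + X^T *m Ahalf s *m Xt)].

(* element eps of Z_2^n acting by sign change of rows i with eps i = true *)
Definition signmx (n : nat) (eps : 'I_n -> bool) : 'M[algC]_n :=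
  diag_mx (\row_i (-1) ^+ eps i).

(* Write L(lam) = N + sum_i R_i / (lam - a_i), where N = [[0, 0], [1, 0]] and the
   residue R_i is the rank-one matrix built from the i-th rows (x_i, p_i) of
   (X, P); also M(lam) = M(a_i) + (lam - a_i) N.  Hence Lt M - M L is a constant
   plus sum_i (Rt_i M(a_i) - M(a_i) R_i) / (lam - a_i), and by uniqueness of
   partial fractions the intertwining relation amounts to the vanishing of the
   constant (which follows from the orthogonality relations) and of every
   residue.  As s_i^2 = lams - a_i is nonzero, M(a_i) is invertible, so the i-th
   residue equation identifies two rank-one matrices: their factors agree up to
   a scalar beta with beta^2 = s_i^2, which is exactly the pair of discrete
   Neumann equations for the i-th rows, up to the sign of (xt_i, pt_i).
   Finally Gamma is recovered from X^T P + P^T X = 0. *)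

From HB Require Import structures.
From mathcomp Require Import all_boot all_order all_algebra all_field ring.
Import Order.TTheory GRing.Theory Num.Theory.
Set Implicit Arguments.
Unset Strict Implicit.
Unset Printing Implicit Defensive.

Local Open Scope ring_scope.

Section PartialFractions.
Variable R : numFieldType.

Lemma poly_eq0_of_horner0 (p : {poly R}) : (forall x, p.[x] = 0) -> p = 0.
Proof.
move=> p0; apply: (@roots_geq_poly_eq0 _ _ [seq k%:R | k <- iota 0 (size p)]).
- by apply/allP => x _; rewrite /root p0.
- by rewrite map_inj_uniq ?iota_uniq // => k l /eqP; rewrite eqr_nat => /eqP.
- by rewrite size_map size_iota.
Qed.

Lemma poly_eq0_off_seq (p : {poly R}) (z : seq R) :
  (forall x, x \notin z -> p.[x] = 0) -> p = 0.
Proof.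
move=> p0; have nz_z : \prod_(c <- z) ('X - c%:P) != 0.
  exact: monic_neq0 (monic_prod_XsubC _ _ _).
apply/eqP; rewrite -(mulIr_eq0 _ (mulIf nz_z)); apply/eqP.
apply: poly_eq0_of_horner0 => x; rewrite hornerM.
have [zx | /p0 ->] := boolP (x \in z); last by rewrite mul0r.
by rewrite horner_prod (big_rem _ zx) /= hornerXsubC subrr mul0r mulr0.
Qed.

Lemma partial_fraction_coef_eq0 n (a : 'I_n -> R) (a_inj : injective a)
  (c : R) (b : 'I_n -> R) :
  (forall lam, (forall i, lam != a i) -> c + \sum_i b i * (lam - a i)^-1 = 0) ->
  forall i, b i = 0.
Proof.
move=> pf0.
pose q := c *: \prod_k ('X - (a k)%:P) + \sum_i b i *: \prod_(k | k != i) ('X - (a k)%:P).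
have q0 : q = 0.
  apply: (@poly_eq0_off_seq _ (codom a)) => x /codomP x_a.
  have x_ne i : x != a i by apply/eqP => x_ai; apply: x_a; exists i.
  rewrite -(mulr0 (\prod_k (x - a k))) -(pf0 x x_ne) mulrDr.
  rewrite hornerD hornerZ horner_prod horner_sum mulrC; congr (_ + _).
    by under eq_bigr do rewrite hornerXsubC.
  rewrite mulr_sumr; apply: eq_bigr => i _.
  rewrite hornerZ horner_prod [in RHS](bigD1 i) //=.
  under eq_bigr do rewrite hornerXsubC.
  by field; rewrite subr_eq0.
move=> i; have := congr1 (horner^~ (a i)) q0.
rewrite hornerD hornerZ horner_prod (bigD1 i) //= hornerXsubC subrr mul0r mulr0 add0r.
rewrite horner_sum (bigD1 i) //= [\sum_(j < n | j != i) _]big1 => [|j ji]; last first.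
  by rewrite hornerZ horner_prod (bigD1 i) 1?eq_sym //= hornerXsubC subrr mul0r mulr0.
rewrite addr0 horner0 hornerZ horner_prod => /eqP; rewrite mulf_eq0 => /orP[/eqP //|].
case/prodf_eq0 => k ki; rewrite hornerXsubC subr_eq0 => /eqP/a_inj ik.
by rewrite ik eqxx in ki.
Qed.

Lemma mx_partial_fraction_coef_eq0 n m k (a : 'I_n -> R) (a_inj : injective a)
  (C : 'M[R]_(m, k)) (B : 'I_n -> 'M[R]_(m, k)) :
  (forall lam, (forall i, lam != a i) -> C + \sum_i (lam - a i)^-1 *: B i = 0) ->
  forall i, B i = 0.
Proof.
move=> pf0 i; apply/matrixP => j l; rewrite mxE.
apply: (@partial_fraction_coef_eq0 _ a a_inj (C j l) (fun i => B i j l)) => lam lam_a.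
have := congr1 (fun M : 'M[R]_(m, k) => M j l) (pf0 lam lam_a).
rewrite !mxE summxE => E; rewrite -[RHS]E; congr (_ + _).
by apply: eq_bigr => i' _; rewrite mxE mulrC.
Qed.

End PartialFractions.

Section RankOne.
Variable R : fieldType.

Lemma eqmx_of_scaled_diff m k (c : R) (A B L L' : 'M[R]_(m, k)) :
  A = B -> (forall j l, L j l - L' j l = c * (A j l - B j l)) -> L = L'.
Proof.
move=> AB dL; apply/matrixP => j l; apply/eqP.
by rewrite -subr_eq0 dL AB subrr mulr0.
Qed.

Lemma nz_mx_entry m k (A : 'M[R]_(m, k)) : A != 0 -> exists i j, A i j != 0.
Proof.
move=> A_nz; have [[i j] Aij|A_0] := pickP (fun ij : 'I_m * 'I_k => A ij.1 ij.2 != 0).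
  by exists i, j.
case/eqP: A_nz; apply/matrixP => i j; rewrite mxE.
by apply/eqP; apply: negbFE (A_0 (i, j)).
Qed.

Lemma rank_one_eq m k (u w : 'cV[R]_m) (z v : 'rV[R]_k) :
  u *m z = w *m v -> v != 0 -> w != 0 ->
  exists beta, w = beta *: u /\ z = beta *: v.
Proof.
move=> uz_wv v_nz w_nz.
have entry j l : u j 0 * z 0 l = w j 0 * v 0 l.
  by have := congr1 (fun M : 'M[R]_(m, k) => M j l) uz_wv; rewrite !mxE !big_ord1.
have [i0 [l0 v_l0]] := nz_mx_entry v_nz; rewrite (ord1 i0) in v_l0.
pose beta := z 0 l0 / v 0 l0.
have w_u : w = beta *: u.
  apply/matrixP => j i; rewrite (ord1 i) mxE; apply: (mulIf v_l0).
  by rewrite -entry mulrAC divfK // mulrC.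
have [j0 [i1 u_j0]] : exists j i, u j i != 0.
  by apply: nz_mx_entry; apply: contraNneq w_nz => u0; rewrite w_u u0 scaler0.
rewrite (ord1 i1) in u_j0; exists beta; split => //.
apply/matrixP => i l; rewrite (ord1 i) mxE; apply: (mulfI u_j0).
by rewrite entry w_u mxE mulrCA mulrA.
Qed.

Lemma mul_cV_eq0 m k (u : 'cV[R]_m) (z : 'rV[R]_k) : u != 0 -> (u *m z == 0) = (z == 0).
Proof.
move=> u_nz; rewrite -trmx_eq0 trmx_mul mulmx_free_eq0 ?trmx_eq0 //.
by rewrite /row_free rank_rV trmx_eq0 u_nz.
Qed.

End RankOne.
Arguments eqmx_of_scaled_diff {R m k} c {A B L L'}.

(* Linear matrix identities are checked entrywise: [mx_expand] turns each entry
   into a polynomial in scalar entries and sums, which [ring] then compares. *)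
Ltac mx_expand :=
  rewrite ?(mul0mx, mulmx0, scaler0, oppr0, add0r, addr0, subr0, sub0r, mulmxBl,
            mulmxDl, mulmxN, mulNmx, mulmxDr, mulmxBr, mul_scalar_mx, mul_mx_scalar,
            mulmxA, scaleNr, scalerN, scale1r, mul1mx, mulmx1);
  rewrite -?scalemxAl -?scalemxAr ?mulmxA !mxE ?scale1r ?mul1r ?mulr1.

Section MatrixSums.
Variable R : comNzRingType.

Lemma summx_block (I : finType) m1 m2 n1 n2 (A : I -> 'M[R]_(m1, n1))
  (B : I -> 'M[R]_(m1, n2)) (C : I -> 'M[R]_(m2, n1)) (D : I -> 'M[R]_(m2, n2)) :
  \sum_i block_mx (A i) (B i) (C i) (D i) =
  block_mx (\sum_i A i) (\sum_i B i) (\sum_i C i) (\sum_i D i).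
Proof.
rewrite unlock; elim: (index_enum I) => /= [|i s ->]; first by rewrite block_mx0.
by rewrite add_block_mx.
Qed.

Lemma sum_row_outer n r (X P : 'M[R]_(n, r)) :
  \sum_i (row i X)^T *m row i P = X^T *m P.
Proof.
apply/matrixP => j k; rewrite summxE !mxE; apply: eq_bigr => i _.
by rewrite !mxE big_ord1 !mxE.
Qed.

Lemma mulmx_diag_sum n r (X P : 'M[R]_(n, r)) (d : 'I_n -> R) :
  X^T *m diag_mx (\row_i d i) *m P = \sum_i d i *: ((row i X)^T *m row i P).
Proof.
apply/matrixP => j k; rewrite mul_mx_diag !mxE summxE; apply: eq_bigr => l _.
by rewrite !mxE big_ord1 !mxE -mulrA mulrCA.
Qed.

Lemma row_diag_mul n m (d : 'I_n -> R) (M : 'M[R]_(n, m)) i :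
  row i (diag_mx (\row_j d j) *m M) = d i *: row i M.
Proof. by rewrite row_mul row_diag_mx -scalemxAl -rowE mxE. Qed.

End MatrixSums.

Section Dyads.
Variables (R : fieldType) (r : nat).

Definition dyad (x p : 'rV[R]_r) : 'M[R]_(r + r) := col_mx x^T (- p^T) *m row_mx p x.

Definition Mpole (G : 'M[R]_r) (s : R) : 'M[R]_(r + r) :=
  block_mx (- G) 1%:M (G *m G - (s ^+ 2)%:M) (- G).

Variables (G : 'M[R]_r) (s : R).
Hypothesis G_sym : G^T = G.

Lemma dyad_factors_eq0 (x p : 'rV[R]_r) :
  (col_mx x^T (- p^T) == 0) = (row_mx p x == 0).
Proof. by rewrite col_mx_eq0 row_mx_eq0 oppr_eq0 !trmx_eq0 andbC. Qed.

Lemma Mpole_intertwines_dyad (x p y q : 'rV[R]_r) :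
  p = s *: y - x *m G -> q = - (s *: x) + y *m G ->
  dyad y q *m Mpole G s = Mpole G s *m dyad x p.
Proof.
move=> -> ->; rewrite /dyad -[LHS]mulmxA [RHS]mulmxA.
have -> : row_mx (- (s *: x) + y *m G) y *m Mpole G s =
          - s *: row_mx (s *: y - x *m G) x.
  rewrite mul_row_block scale_row_mx.
  by congr row_mx; apply/matrixP => j k; mx_expand; ring.
have -> : Mpole G s *m col_mx x^T (- (s *: y - x *m G)^T) =
          - s *: col_mx y^T (- (- (s *: x) + y *m G)^T).
  rewrite mul_block_col scale_col_mx !(raddfB, raddfD, raddfN) /= !linearZ /= !trmx_mul G_sym.
  by congr col_mx; apply/matrixP => j k; mx_expand; ring.
by rewrite -scalemxAl -scalemxAr.
Qed.

Lemma Mpole_dyad_scaled (x p y q : 'rV[R]_r) (beta : R) :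
  Mpole G s *m col_mx x^T (- p^T) = beta *: col_mx y^T (- q^T) ->
  row_mx q y *m Mpole G s = beta *: row_mx p x ->
  [/\ p = - (x *m G) - beta *: y, q = beta *: x + y *m G,
      (beta ^+ 2 - s ^+ 2) *: x = 0 & (beta ^+ 2 - s ^+ 2) *: y = 0].
Proof.
rewrite mul_block_col scale_col_mx => /eq_col_mx[/(congr1 trmx) e1 /(congr1 trmx) e2].
rewrite mul_row_block scale_row_mx => /eq_row_mx[e3 e4].
rewrite !(raddfB, raddfN) /= !linearZ /= !trmx_mul !trmxK in e1 e2.
rewrite ?(raddfB, raddfN) /= ?trmx_mul ?tr_scalar_mx ?trmx1 G_sym in e1 e2.
have p_eq : p = - (x *m G) - beta *: y.
  by apply: (eqmx_of_scaled_diff (-1) e1) => j l; mx_expand; ring.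
have q_eq : q = beta *: x + y *m G.
  by apply: (eqmx_of_scaled_diff 1 e4) => j l; mx_expand; ring.
rewrite p_eq q_eq in e2 e3; split => //.
- by apply: (eqmx_of_scaled_diff 1 e2) => j l; mx_expand; ring.
- by apply: (eqmx_of_scaled_diff 1 e3) => j l; mx_expand; ring.
Qed.

Hypothesis s_neq0 : s != 0.

Lemma Mpole_mul_col_eq0 k (u v : 'M[R]_(r, k)) :
  Mpole G s *m col_mx u v = 0 -> col_mx u v = 0.
Proof.
rewrite mul_block_col -col_mx0 => /eq_col_mx[e1 e2].
have v_Gu : v = G *m u by apply: (eqmx_of_scaled_diff 1 e1) => j l; mx_expand; ring.
have : s ^+ 2 *: u = 0.
  by apply: (eqmx_of_scaled_diff (-1) e2) => j l; rewrite v_Gu; mx_expand; ring.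
move/eqP; rewrite scaler_eq0 expf_eq0 (negbTE s_neq0) andbF /= => /eqP u0.
by rewrite v_Gu u0 mulmx0 col_mx0.
Qed.

Lemma row_mul_Mpole_eq0 k (u v : 'M[R]_(k, r)) :
  row_mx u v *m Mpole G s = 0 -> row_mx u v = 0.
Proof.
rewrite mul_row_block -row_mx0 => /eq_row_mx[e1 e2].
have u_vG : u = v *m G by apply: (eqmx_of_scaled_diff 1 e2) => j l; mx_expand; ring.
have : s ^+ 2 *: v = 0.
  by apply: (eqmx_of_scaled_diff (-1) e1) => j l; rewrite u_vG; mx_expand; ring.
move/eqP; rewrite scaler_eq0 expf_eq0 (negbTE s_neq0) andbF /= => /eqP v0.
by rewrite u_vG v0 mul0mx row_mx0.
Qed.

Lemma Mpole_dyad_sign (x p y q : 'rV[R]_r) :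
  dyad y q *m Mpole G s = Mpole G s *m dyad x p ->
  exists e : bool, p = s *: ((-1) ^+ e *: y) - x *m G /\
                   (-1) ^+ e *: q = - (s *: x) + ((-1) ^+ e *: y) *m G.
Proof.
rewrite /dyad -[LHS]mulmxA [RHS]mulmxA => E.
have [px0 | px_nz] := eqVneq (row_mx p x) 0.
  have qy0 : row_mx q y = 0.
    have [/eqP|yq_nz] := eqVneq (col_mx y^T (- q^T)) 0.
      by rewrite dyad_factors_eq0 => /eqP.
    apply: row_mul_Mpole_eq0; apply/eqP; rewrite -(mul_cV_eq0 _ yq_nz) E.
    by move/eqP: px0; rewrite -dyad_factors_eq0 => /eqP ->; rewrite mulmx0 mul0mx.
  move: px0 qy0; rewrite -!row_mx0 => /eq_row_mx[-> ->] /eq_row_mx[-> ->].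
  by exists false; split; apply/matrixP => j l; mx_expand.
have W_nz : Mpole G s *m col_mx x^T (- p^T) != 0.
  by apply: contraNneq px_nz => /Mpole_mul_col_eq0/eqP; rewrite dyad_factors_eq0.
(* [Mpole G s] is invertible, so both sides are nonzero rank-one matrices. *)
have [beta [/Mpole_dyad_scaled Sc /Sc[p_eq q_eq x0 y0]]] := rank_one_eq E px_nz W_nz.
have : beta ^+ 2 = s ^+ 2.
  apply/eqP; rewrite -subr_eq0; apply: contraNT px_nz => beta_ne.
  have zero_of (z : 'rV[R]_r) : (beta ^+ 2 - s ^+ 2) *: z = 0 -> z = 0.
    by move/eqP; rewrite scaler_eq0 (negbTE beta_ne) => /eqP.
  by rewrite p_eq (zero_of x x0) (zero_of y y0) !(mul0mx, scaler0, oppr0, addr0) row_mx0.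
rewrite {}p_eq {}q_eq; move/eqP; rewrite eqf_sqr => /orP[/eqP-> | /eqP->].
  by exists true; split; apply/matrixP => j l; rewrite expr1; mx_expand; ring.
by exists false; split; apply/matrixP => j l; rewrite expr0; mx_expand; ring.
Qed.

End Dyads.

Section Neumann.
Variables (R : numFieldType) (n r : nat) (D : 'M[R]_n) (G : 'M[R]_r).
Hypotheses (D_sym : D^T = D) (G_sym : G^T = G).
Variables (X Y P : 'M[R]_(n, r)).
Hypothesis X_orth : X^T *m X = 1%:M.
Hypothesis P_eq : P = D *m Y - X *m G.

Lemma neumann_cross_eq0 (Q : 'M[R]_(n, r)) :
  Y^T *m Y = 1%:M -> Q = - (D *m X) + Y *m G -> Q^T *m Y + X^T *m P = 0.
Proof.
move=> Y_orth ->; rewrite P_eq [(_ + _)^T]raddfD /= [(- _)^T]raddfN /=.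
rewrite !trmx_mul D_sym G_sym.
rewrite mulmxDl mulmxBr mulNmx -!mulmxA Y_orth mulmx1 [X^T *m (X *m G)]mulmxA X_orth mul1mx.
by rewrite addrACA addNr subrr addr0.
Qed.

Lemma neumann_gamma :
  X^T *m P + P^T *m X = 0 -> G = 2^-1 *: (Y^T *m D *m X + X^T *m D *m Y).
Proof.
rewrite P_eq [(_ - _)^T]raddfB /= !trmx_mul D_sym G_sym mulmxBr mulmxBl.
rewrite [X^T *m (X *m G)]mulmxA X_orth mul1mx -[G *m X^T *m X]mulmxA X_orth mulmx1.
move=> E; apply: (eqmx_of_scaled_diff (- 2^-1) E) => j k; mx_expand.
by field.
Qed.

End Neumann.

Section Lax.
Variables (n r : nat) (a : 'I_n -> algC).

Definition lax_const : 'M[algC]_(r + r) := block_mx 0 0 1%:M 0.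

Definition lax_residue (X P : 'M[algC]_(n, r)) (i : 'I_n) : 'M[algC]_(r + r) :=
  dyad (row i X) (row i P).

Lemma Lax_partial_fraction (X P : 'M[algC]_(n, r)) lam :
  Lax a X P lam = lax_const + \sum_i (lam - a i)^-1 *: lax_residue X P i.
Proof.
rewrite /Lax /Ainv !mulmx_diag_sum /lax_const.
under [in RHS]eq_bigr do rewrite /lax_residue /dyad mul_col_row scale_block_mx.
rewrite summx_block add_block_mx !add0r; congr block_mx.
- rewrite -sumrN; congr (_ + _); apply: eq_bigr => i _.
  by rewrite mulNmx scalerN.
- by rewrite -sumrN; apply: eq_bigr => i _; rewrite mulNmx scalerN.
Qed.

Lemma Mmat_shift (G : 'M[algC]_r) lam mu lams :
  Mmat G lam lams = Mmat G mu lams + (lam - mu) *: lax_const.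
Proof.
rewrite /Mmat /lax_const scale_block_mx add_block_mx !scaler0 !addr0 scalemx1.
by congr block_mx; rewrite addrAC -raddfD /= [mu - lams + _]addrC addrA subrK.
Qed.

Lemma Mmat_root (G : 'M[algC]_r) b lams s :
  s ^+ 2 = lams - b -> Mmat G b lams = Mpole G s.
Proof.
move=> s2; rewrite /Mmat /Mpole s2 addrC; congr block_mx; congr (_ + _).
by rewrite -raddfN /= opprB.
Qed.

Lemma lax_const_commutator (G : 'M[algC]_r) lam lams :
  lax_const *m Mmat G lam lams - Mmat G lam lams *m lax_const =
  block_mx (- 1%:M) 0 0 1%:M.
Proof.
rewrite /lax_const /Mmat !mulmx_block !(mul0mx, mulmx0, mul1mx, mulmx1, addr0, add0r).
by rewrite opp_block_mx add_block_mx !oppr0 !addr0 subrr sub0r.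
Qed.

Lemma residue_mul_lax_const (X P : 'M[algC]_(n, r)) i :
  lax_residue X P i *m lax_const =
  block_mx ((row i X)^T *m row i X) 0 (- ((row i P)^T *m row i X)) 0.
Proof.
rewrite /lax_residue /dyad /lax_const -mulmxA mul_row_block.
by rewrite !(mulmx0, mulmx1, addr0, add0r) mul_col_row !mulmx0 mulNmx.
Qed.

Lemma lax_const_mul_residue (X P : 'M[algC]_(n, r)) i :
  lax_const *m lax_residue X P i =
  block_mx 0 0 ((row i X)^T *m row i P) ((row i X)^T *m row i X).
Proof.
rewrite /lax_residue /dyad /lax_const mulmxA mul_block_col.
by rewrite !(mul0mx, mul1mx, addr0) mul_col_row !mul0mx.
Qed.

Lemma residue_commutator_sum (X P Xt Pt : 'M[algC]_(n, r)) :
  \sum_i (lax_residue Xt Pt i *m lax_const - lax_const *m lax_residue X P i) =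
  block_mx (Xt^T *m Xt) 0 (- (Pt^T *m Xt + X^T *m P)) (- (X^T *m X)).
Proof.
under eq_bigr do rewrite residue_mul_lax_const lax_const_mul_residue opp_block_mx add_block_mx.
rewrite summx_block; congr block_mx.
- by under eq_bigr do rewrite subr0; rewrite sum_row_outer.
- by rewrite big1 // => i _; rewrite subrr.
- by rewrite sumrB sumrN !sum_row_outer opprD.
- by under eq_bigr do rewrite sub0r; rewrite sumrN sum_row_outer.
Qed.

Lemma lax_defect_decomp (X P Xt Pt : 'M[algC]_(n, r)) (G : 'M[algC]_r) lam lams :
  (forall i, lam != a i) ->
  Lax a Xt Pt lam *m Mmat G lam lams - Mmat G lam lams *m Lax a X P lam =
  block_mx (Xt^T *m Xt - 1%:M) 0 (- (Pt^T *m Xt + X^T *m P)) (1%:M - X^T *m X) +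
  \sum_i (lam - a i)^-1 *: (lax_residue Xt Pt i *m Mmat G (a i) lams
                              - Mmat G (a i) lams *m lax_residue X P i).
Proof.
move=> lam_a; rewrite !Lax_partial_fraction mulmxDl mulmxDr mulmx_suml mulmx_sumr.
rewrite opprD addrACA -sumrB lax_const_commutator.
have residue_part i :
    (lam - a i)^-1 *: lax_residue Xt Pt i *m Mmat G lam lams
      - Mmat G lam lams *m ((lam - a i)^-1 *: lax_residue X P i) =
    (lax_residue Xt Pt i *m lax_const - lax_const *m lax_residue X P i)
      + (lam - a i)^-1 *: (lax_residue Xt Pt i *m Mmat G (a i) lams
                            - Mmat G (a i) lams *m lax_residue X P i).
  rewrite -scalemxAl -scalemxAr (Mmat_shift G lam (a i)) mulmxDr mulmxDl.
  rewrite -!scalemxAr -!scalemxAl !scalerDr !scalerA mulVf ?subr_eq0 // !scale1r.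
  by rewrite scalerN opprD addrACA addrC.
under eq_bigr do rewrite residue_part.
rewrite big_split /= residue_commutator_sum addrA add_block_mx.
by rewrite addr0 sub0r [- 1%:M + _]addrC.
Qed.

End Lax.

Section DiscreteNeumann.
Variables (n r : nat) (a : 'I_n -> algC) (lams : algC) (s : 'I_n -> algC).
Hypothesis s_root : forall i, s i ^+ 2 = lams - a i.

Lemma Ahalf_sym : (Ahalf s)^T = Ahalf s.
Proof. exact: tr_diag_mx. Qed.

Lemma row_Ahalf m (M : 'M[algC]_(n, m)) i : row i (Ahalf s *m M) = s i *: row i M.
Proof. exact: row_diag_mul. Qed.

Lemma row_signmx m (eps : 'I_n -> bool) (M : 'M[algC]_(n, m)) i :
  row i (signmx eps *m M) = (-1) ^+ eps i *: row i M.
Proof. exact: row_diag_mul. Qed.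

Lemma neumann_intertwining (X P Xt Pt : 'M[algC]_(n, r)) (G : 'M[algC]_r) :
  inTV X P -> inTV Xt Pt -> G^T = G -> neumann s X P Xt Pt G ->
  forall lam, (forall i, lam != a i) ->
    Lax a Xt Pt lam *m Mmat G lam lams = Mmat G lam lams *m Lax a X P lam.
Proof.
move=> [X_orth _] [Xt_orth _] G_sym [P_eq Pt_eq _] lam lam_a.
apply/eqP; rewrite -subr_eq0 lax_defect_decomp //.
rewrite (neumann_cross_eq0 Ahalf_sym G_sym X_orth P_eq Xt_orth Pt_eq).
rewrite Xt_orth X_orth subrr oppr0 block_mx0 add0r big1 // => i _.
rewrite /lax_residue (Mmat_root G (s_root i)).
rewrite (Mpole_intertwines_dyad G_sym (x := row i X) (p := row i P)) ?subrr ?scaler0 //.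
- by rewrite P_eq raddfB /= row_Ahalf row_mul.
- by rewrite Pt_eq raddfD raddfN /= row_Ahalf row_mul.
Qed.

Hypotheses (a_inj : injective a) (lams_a : forall i, lams != a i).

Lemma root_neq0 i : s i != 0.
Proof. by apply: contraTneq (lams_a i) => s0; rewrite negbK -subr_eq0 -s_root s0 expr0n. Qed.

Lemma intertwining_neumann_up_to_signs (X P Xt Pt : 'M[algC]_(n, r)) (G : 'M[algC]_r) :
  inTV X P -> G^T = G ->
  (forall lam, (forall i, lam != a i) ->
     Lax a Xt Pt lam *m Mmat G lam lams = Mmat G lam lams *m Lax a X P lam) ->
  exists eps, neumann s X P (signmx eps *m Xt) (signmx eps *m Pt) G.
Proof.
move=> [X_orth XP_skew] G_sym intertw.
pose B i := lax_residue Xt Pt i *m Mmat G (a i) lams - Mmat G (a i) lams *m lax_residue X P i.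
have B0 : forall i, B i = 0.
  apply: (mx_partial_fraction_coef_eq0 a_inj
    (C := block_mx (Xt^T *m Xt - 1%:M) 0 (- (Pt^T *m Xt + X^T *m P)) (1%:M - X^T *m X)))
    => lam lam_a.
  by rewrite /B -lax_defect_decomp // intertw // subrr.
have residue_eq i :
    lax_residue Xt Pt i *m Mmat G (a i) lams = Mmat G (a i) lams *m lax_residue X P i.
  by apply/eqP; rewrite -subr_eq0 -/(B i) B0.
have sign_rows i : exists e : bool,
    row i P = s i *: ((-1) ^+ e *: row i Xt) - row i X *m G /\
    (-1) ^+ e *: row i Pt = - (s i *: row i X) + ((-1) ^+ e *: row i Xt) *m G.
  move: (residue_eq i); rewrite /lax_residue (Mmat_root G (s_root i)).
  by move/(Mpole_dyad_sign G_sym (root_neq0 i)) => [e rows]; exists e.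
have [eps eps_rows] := fin_all_exists sign_rows.
exists eps.
have P_eq : P = Ahalf s *m (signmx eps *m Xt) - X *m G.
  apply/row_matrixP => i.
  by rewrite raddfB /= row_Ahalf row_signmx row_mul (eps_rows i).1.
split=> //.
- apply/row_matrixP => i; rewrite row_signmx (eps_rows i).2.
  by rewrite raddfD raddfN /= row_Ahalf row_mul row_signmx.
- exact: (neumann_gamma Ahalf_sym G_sym X_orth P_eq XP_skew).
Qed.

End DiscreteNeumann.

Theorem theorem6p2 (n r : nat) (a : 'I_n -> algC) (ha : injective a)
  (lams : algC) (hlams : forall i, lams != a i)
  (s : 'I_n -> algC) (hs : forall i, s i ^+ 2 = lams - a i) :
  (forall (X P Xt Pt : 'M[algC]_(n, r)) (G : 'M[algC]_r),
     inTV X P -> inTV Xt Pt -> G^T = G ->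
     neumann s X P Xt Pt G ->
     forall lam : algC, (forall i, lam != a i) ->
       Lax a Xt Pt lam *m Mmat G lam lams = Mmat G lam lams *m Lax a X P lam)
  /\
  (forall (X P Xt Pt : 'M[algC]_(n, r)) (G : 'M[algC]_r),
     inTV X P -> inTV Xt Pt -> G^T = G ->
     (forall lam : algC, (forall i, lam != a i) ->
       Lax a Xt Pt lam *m Mmat G lam lams = Mmat G lam lams *m Lax a X P lam) ->
     exists eps : 'I_n -> bool,
       neumann s X P (signmx eps *m Xt) (signmx eps *m Pt) G).
Proof.
split=> X P Xt Pt G XP_inTV XtPt_inTV G_sym.
- exact: neumann_intertwining.
- exact: intertwining_neumann_up_to_signs.
Qed.
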